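(* Let $X$ be a countable $P$-space. Then $\Sigma\mathcal O(X)$ is sober.
   Context: $\mathcal O(X)$ is the lattice of open subsets of $X$ ordered by inclusion, and $\Sigma\mathcal O(X)$ is this lattice with its Scott topology (a set $U$ is Scott open iff it is an upper set and for every directed $D$, $\bigvee D\in U$ implies $D\cap U\neq\emptyset$). A space is a $P$-space if countable intersections of open sets are open. A $T_0$ space is sober if every irreducible closed set equals $\overline{\{x\}}$ for some point $x$. *)

From HB Require Import structures.
From mathcomp Require Import all_boot all_order.
From mathcomp Require Import classical_sets boolp cardinality topology.
Set Implicit Arguments. Unset Strict Implicit. Unset Printing Implicit Defensive.
Local Open Scope classical_set_scope.

(** P-space: countable intersections of open sets are open
    (countable families indexed by nat; finite ones by repetition). *)
Definition P_space (X : topologicalType) : Prop :=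
  forall F : nat -> set X, (forall n, open (F n)) -> open (\bigcap_n F n).

Record opens (X : topologicalType) := Opens {
  oset : set X ;
  oset_open : open oset }.

Definition opens_le (X : topologicalType) (U V : opens X) : Prop :=
  oset U `<=` oset V.

Section Scott.
Variables (T : Type) (le : T -> T -> Prop).

Definition directed (D : set T) : Prop :=
  D !=set0 /\ forall x y, D x -> D y -> exists2 z, D z & le x z /\ le y z.

Definition is_sup (D : set T) (s : T) : Prop :=
  (forall d, D d -> le d s) /\ (forall u, (forall d, D d -> le d u) -> le s u).

Definition upper_set (U : set T) : Prop :=
  forall x y, U x -> le x y -> U y.

Definition scott_open (U : set T) : Prop :=
  upper_set U /\
  forall D s, directed D -> is_sup D s -> U s -> D `&` U !=set0.
End Scott.

Section Space.
Variables (T : Type) (isOpen : set (set T)).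

Definition sp_closed (C : set T) : Prop := isOpen (~` C).

Definition sp_closure (A : set T) : set T :=
  fun x => forall C, sp_closed C -> A `<=` C -> C x.

Definition sp_irreducible (F : set T) : Prop :=
  F !=set0 /\
  forall A B, sp_closed A -> sp_closed B -> F `<=` A `|` B -> F `<=` A \/ F `<=` B.

Definition sp_T0 : Prop :=
  forall x y, x <> y -> exists2 U, isOpen U & (U x /\ ~ U y) \/ (U y /\ ~ U x).

Definition sp_sober : Prop :=
  sp_T0 /\
  forall F, sp_closed F -> sp_irreducible F -> exists x, F = sp_closure [set x].
End Space.

Definition SigmaO_sober (X : topologicalType) : Prop :=
  sp_sober (scott_open (@opens_le X)).

From mathcomp Require Import all_boot classical_sets cardinality topology.
From mathcomp Require Import boolp.
Local Open Scope classical_set_scope.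

(* An irreducible Scott-closed family F of opens is the closure of its union
   S.  Irreducibility puts every finite subset of S inside a member of F.
   Enumerating X, pick W_n in F containing the points of S of index <= n; in
   a P-space C_n := \bigcap_(k >= n) W_k is open, it lies in F because F is a
   lower set, and the chain (C_n) is increasing with union S.  Scott-closed
   sets are closed under directed sups, so S is in F and F is the down-set of
   S, i.e. the closure of {S}.  T0-ness holds for the Scott topology of any
   partial order. *)

Section ScottTopology.
Context {T : Type} {le : T -> T -> Prop}.
Local Notation sopen := (scott_open le).
Local Notation sclosed := (sp_closed sopen).

Lemma scott_openT : sopen setT.
Proof. by split=> // D s [[d Dd] _] _ _; exists d. Qed.

Lemma scott_openI {U V} : sopen U -> sopen V -> sopen (U `&` V).
Proof.
move=> [upU supU] [upV supV]; split.
  by move=> x y [Ux Vx] xy; split; [exact: upU Ux xy | exact: upV Vx xy].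
move=> D s dirD supDs [Us Vs].
have [d1 [Dd1 Ud1]] := supU D s dirD supDs Us.
have [d2 [Dd2 Vd2]] := supV D s dirD supDs Vs.
have [z Dz [d1z d2z]] := dirD.2 _ _ Dd1 Dd2.
by exists z; split => //; split; [exact: upU Ud1 d1z | exact: upV Vd2 d2z].
Qed.

Lemma scott_closed_lower {F x y} : sclosed F -> F x -> le y x -> F y.
Proof.
by move=> [upCF _] Fx yx; apply: contrapT => Fy; exact: upCF _ _ Fy yx Fx.
Qed.

Lemma scott_closed_sup {F D s} :
  sclosed F -> directed le D -> is_sup le D s -> D `<=` F -> F s.
Proof.
move=> [_ supCF] dirD supDs DF; apply: contrapT => Fs.
by have [d [Dd Fd]] := supCF D s dirD supDs Fs; exact: Fd (DF d Dd).
Qed.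

Lemma directed_range_homo (c : nat -> T) :
  (forall n m, (n <= m)%N -> le (c n) (c m)) -> directed le (range c).
Proof.
move=> c_homo; split; first by exists (c 0%N), 0%N.
move=> _ _ [n _ <-] [m _ <-]; exists (c (maxn n m)); first by exists (maxn n m).
by split; apply: c_homo; [exact: leq_maxl | exact: leq_maxr].
Qed.

Hypotheses (le_refl : forall x, le x x)
  (le_trans : forall x y z, le x y -> le y z -> le x z).

Lemma scott_closed_down x : sclosed [set y | le y x].
Proof.
rewrite /sp_closed; split.
  by move=> y z nyx yz zx; apply: nyx; exact: le_trans yz zx.
move=> D s _ [_ leastDs] nsx; apply: contrapT => noD; apply: nsx.
by apply: leastDs => d Dd; apply: contrapT => ndx; apply: noD; exists d.
Qed.

Lemma scott_closure1 x : sp_closure sopen [set x] = [set y | le y x].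
Proof.
apply/seteqP; split=> [y |y yx C closedC xC].
  by apply; [exact: scott_closed_down | move=> _ ->].
exact: scott_closed_lower closedC (xC x erefl) yx.
Qed.

Lemma scott_T0 : (forall x y, le x y -> le y x -> x = y) -> sp_T0 sopen.
Proof.
move=> le_anti x y xy.
have [lexy|nlexy] := pselect (le x y).
  have nleyx : ~ le y x by move=> leyx; exact: xy (le_anti _ _ lexy leyx).
  exists (~` [set z | le z x]); first exact: scott_closed_down.
  by right; split=> [//|]; apply; exact: le_refl.
exists (~` [set z | le z y]); first exact: scott_closed_down.
by left; split=> [//|]; apply; exact: le_refl.
Qed.

End ScottTopology.

Lemma irreducible_meet {T : Type} {isOpen : set (set T)} {F U V : set T} :
  sp_irreducible isOpen F -> isOpen U -> isOpen V ->
  U `&` F !=set0 -> V `&` F !=set0 -> (U `&` V) `&` F !=set0.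
Proof.
move=> [_ irrF] oU oV [a [Ua Fa]] [b [Vb Fb]]; apply: contrapT => UVF0.
have cU : sp_closed isOpen (~` U) by rewrite /sp_closed setCK.
have cV : sp_closed isOpen (~` V) by rewrite /sp_closed setCK.
have : F `<=` ~` U `|` ~` V.
  move=> w Fw; apply: contrapT => /not_orP[/contrapT Uw /contrapT Vw].
  by apply: UVF0; exists w.
by case/(irrF _ _ cU cV) => sub; [exact: sub a Fa Ua | exact: sub b Fb Vb].
Qed.

Section OpensLattice.
Context {X : topologicalType}.
Local Notation le := (@opens_le X).
Local Notation sopen := (scott_open le).

Lemma opens_le_refl U : le U U. Proof. by []. Qed.

Lemma opens_le_trans U V W : le U V -> le V W -> le U W.
Proof. by move=> UV VW x /UV /VW. Qed.

Lemma opens_le_anti U V : le U V -> le V U -> U = V.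
Proof.
case: U V => [u ou] [v ov] /= uv vu.
have uvE : u = v by rewrite eqEsubset.
by subst v; congr Opens; exact: Prop_irrelevance.
Qed.

Definition opens_bigcup (D : set (opens X)) : opens X :=
  Opens (bigcup_open (fun d (_ : D d) => oset_open d)).

Lemma is_sup_opensP D s : is_sup le D s <-> oset s = \bigcup_(d in D) oset d.
Proof.
split=> [[ubs leasts] | sE].
  apply/seteqP; split; last by move=> x [d Dd dx]; exact: ubs d Dd x dx.
  by apply: (leasts (opens_bigcup D)) => d Dd x dx; exists d.
rewrite /is_sup /opens_le sE; split; first by move=> d Dd x dx; exists d.
by move=> u ubu x [d Dd dx]; exact: ubu d Dd x dx.
Qed.

Lemma scott_open_opens_at q : sopen [set W | oset W q].
Proof.
split; first by move=> U V Uq UV; exact: UV.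
move=> D s _ /is_sup_opensP sE sq.
have [d Dd dq] : (\bigcup_(d in D) oset d) q by rewrite -sE.
by exists d.
Qed.

Lemma scott_open_supset_seq (s : seq X) : sopen [set W | [set` s] `<=` oset W].
Proof.
elim: s => [|q s IHs].
  suff -> : [set W : opens X | [set` [::]] `<=` oset W] = setT.
    exact: scott_openT.
  by apply/seteqP; split=> // W _ x.
suff -> : [set W | [set` q :: s] `<=` oset W] =
          [set W | oset W q] `&` [set W | [set` s] `<=` oset W].
  exact: scott_openI (scott_open_opens_at q) IHs.
apply/seteqP; split=> W.
  move=> qsW; split=> [|x xs]; apply: qsW.
    by rewrite /= in_cons eqxx.
  by rewrite /= in_cons xs orbT.
by move=> [Wq sW] x /=; rewrite in_cons => /orP[/eqP -> // | /sW].
Qed.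

Lemma irreducible_supset_seq F (s : seq X) : sp_irreducible sopen F ->
  [set` s] `<=` \bigcup_(W in F) oset W ->
  exists2 W, F W & [set` s] `<=` oset W.
Proof.
move=> irrF; elim: s => [_ | q s IHs qsS].
  by have [[W FW] _] := irrF; exists W.
have [W FW Wq] : (\bigcup_(W in F) oset W) q.
  by apply: qsS; rewrite /= in_cons eqxx.
have [V FV sV] : exists2 V, F V & [set` s] `<=` oset V.
  by apply: IHs => x xs; apply: qsS; rewrite /= in_cons xs orbT.
have qF : [set W | oset W q] `&` F !=set0 by exists W.
have sF : [set W | [set` s] `<=` oset W] `&` F !=set0 by exists V.
have [Z [[Zq sZ] FZ]] := irreducible_meet irrF (scott_open_opens_at q)
  (scott_open_supset_seq s) qF sF.
by exists Z => // x /=; rewrite in_cons => /orP[/eqP -> // | /sZ].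
Qed.

Lemma irreducible_supset_finite F A : sp_irreducible sopen F -> finite_set A ->
  A `<=` \bigcup_(W in F) oset W -> exists2 W, F W & A `<=` oset W.
Proof. by move=> irrF /finite_fsetP[Y ->]; exact: irreducible_supset_seq. Qed.

End OpensLattice.

Lemma P_space_scott_closed_bigcup {X : topologicalType} {F : set (opens X)} :
  countable [set: X] -> P_space X -> sp_closed (scott_open (@opens_le X)) F ->
  (forall A, finite_set A -> A `<=` \bigcup_(W in F) oset W ->
    exists2 W, F W & A `<=` oset W) ->
  F (opens_bigcup F).
Proof.
move=> /countable_injP[f f_inj] PX closedF finF.
pose S := \bigcup_(W in F) oset W.
pose A n := [set q | S q /\ (f q <= n)%N].
have finA n : finite_set (A n).
  apply: (@sub_finite_set _ _ (f @^-1` `I_n.+1)) => [q [_ fqn] //|].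
  by apply: finite_preimage => // x y _ _; apply: f_inj; rewrite in_setT.
have /choice[W FW] : forall n, exists W, F W /\ A n `<=` oset W.
  move=> n; have [V FV AV] := finF _ (finA n) (fun q (Aq : A n q) => Aq.1).
  by exists V.
have C_open n : open (\bigcap_k oset (W (n + k)%N)).
  by apply: PX => k; exact: oset_open.
pose C n := Opens (C_open n).
have CF n : F (C n).
  apply: scott_closed_lower closedF (FW n).1 _ => x /(_ 0%N I).
  by rewrite addn0.
have C_homo n m : (n <= m)%N -> opens_le (C n) (C m).
  by move=> nm x Cx k _; rewrite -(subnKC nm) -addnA; exact: Cx.
have supC : is_sup (@opens_le X) (range C) (opens_bigcup F).
  apply/is_sup_opensP/seteqP; split=> x.
    move=> Sx; exists (C (f x)); first by exists (f x).
    by move=> k _; apply: (FW _).2; split=> //; exact: leq_addr.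
  move=> [_ [n _ <-] Cx]; exists (W n); first exact: (FW n).1.
  by have := Cx 0%N I; rewrite addn0.
apply: scott_closed_sup closedF (directed_range_homo C C_homo) supC _.
by move=> _ [n _ <-].
Qed.

Theorem corollary4p7 (X : topologicalType) :
  countable [set: X] -> P_space X -> SigmaO_sober X.
Proof.
move=> countX PX; split.
  exact: scott_T0 opens_le_refl opens_le_trans opens_le_anti.
move=> F closedF irrF; exists (opens_bigcup F).
rewrite (scott_closure1 opens_le_refl opens_le_trans).
apply/seteqP; split=> [W FW x Wx | W WS]; first by exists W.
apply: (scott_closed_lower closedF _ WS).
apply: P_space_scott_closed_bigcup countX PX closedF _ => A.
exact: irreducible_supset_finite.
Qed.
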